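(* Let $k<n$ and let $A_1,\ldots,A_k$ be $n\times n$ ASMs, $A_s=[a_{ijs}]$, such that for all $1\le i,j\le n$ the vector $(a_{ij1},\ldots,a_{ijk})$ is $(1,* )$-alternating. Then there exist $n\times n$ permutation matrices $A_{k+1},\ldots,A_n$ such that $[A_1,\ldots,A_k,A_{k+1},\ldots,A_n]$ is an $n\times n\times n$ ASHM.
   Context: An $n\times n$ alternating sign matrix (ASM) is an $n\times n$ matrix with entries in $\{0,1,-1\}$ such that in every row and column the nonzeros alternate in sign, beginning and ending with $+1$. An $n\times n\times n$ hypermatrix $[A_1,\ldots,A_n]$ with $A_s=[a_{ijs}]_{i,j}$ is an ASHM if all entries are in $\{0,\pm1\}$ and in every line (obtained by fixing two of the three indices) the nonzeros alternate in sign beginning and ending with $+1$. A $(0,\pm1)$-vector is $(1,* )$-alternating if its nonzeros (if any) alternate in sign and the first nonzero is $1$ (the zero vector qualifies). *)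

From mathcomp Require Import all_boot all_order all_algebra all_fingroup.
Set Implicit Arguments. Unset Strict Implicit. Unset Printing Implicit Defensive.
Import GRing.Theory Num.Theory.
Local Open Scope ring_scope.

Definition zpm1 (x : int) : bool := [|| x == 0, x == 1 | x == -1].

(* (1,star)-alternating: the nonzero entries (if any) are +-1, alternate in sign,
   and the first nonzero is 1 (the zero vector qualifies). *)
Definition one_star_alt (s : seq int) : bool :=
  let t := [seq x <- s | x != 0] in
  all zpm1 s && (head 1 t == 1) && sorted (fun x y => y == - x) t.

Definition sign_alt (s : seq int) : bool :=
  let t := [seq x <- s | x != 0] in
  one_star_alt s && (t != [::]) && (last 0 t == 1).

Definition row_seq n (A : 'M[int]_n) (i : 'I_n) : seq int := [seq A i j | j <- enum 'I_n].
Definition col_seq n (A : 'M[int]_n) (j : 'I_n) : seq int := [seq A i j | i <- enum 'I_n].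

Definition is_ASM n (A : 'M[int]_n) : Prop :=
  (forall i j, zpm1 (A i j)) /\
  (forall i, sign_alt (row_seq A i)) /\ (forall j, sign_alt (col_seq A j)).

(* n x n x n alternating sign hypermatrix [H_1, ..., H_n], a_{ijs} = H s i j *)
Definition is_ASHM n (H : 'I_n -> 'M[int]_n) : Prop :=
  (forall i j s, zpm1 (H s i j)) /\
  (forall j s, sign_alt [seq H s i j | i <- enum 'I_n]) /\
  (forall i s, sign_alt [seq H s i j | j <- enum 'I_n]) /\
  (forall i j, sign_alt [seq H s i j | s <- enum 'I_n]).

From mathcomp Require Import all_boot all_order all_algebra all_fingroup.
From mathcomp Require Import zify.
Set Implicit Arguments. Unset Strict Implicit. Unset Printing Implicit Defensive.
Import GRing.Theory Num.Theory.

(* Since every vertical line of the given layers alternates starting with +1,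
   the layers sum to a 0/1 matrix P; since every layer has unit line sums, the
   complement J - P has all line sums n - k. By Hall's theorem this regular
   0/1 matrix is a sum of n - k permutation matrices, which are the missing
   layers: together they put a single +1 on a vertical line exactly where the
   given entries sum to 0, i.e. where the line is still empty or ends with -1. *)

Section HallMarriage.
Variable T : finType.
Implicit Types (R : rel T) (A B D : {set T}).

Definition neighbours R A : {set T} := [set y | [exists x in A, R x y]].

Definition hall_condition R D := forall A, A \subset D -> #|A| <= #|neighbours R A|.

Definition matching R D (f : T -> T) :=
  {in D &, injective f} /\ {in D, forall x, R x (f x)}.

Lemma neighboursP R A y :
  reflect (exists2 x, x \in A & R x y) (y \in neighbours R A).
Proof. by rewrite inE; apply: (iffP exists_inP). Qed.

Lemma matching_subrel R R' D f : subrel R' R -> matching R' D f -> matching R D f.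
Proof. by move=> sR [fi fR]; split=> // x /fR /sR. Qed.

Lemma matching_glue R D A f g :
    A \subset D -> matching R A f -> matching R (D :\: A) g ->
    {in A & D :\: A, forall x y, f x != g y} ->
  matching R D (fun x => if x \in A then f x else g x).
Proof.
move=> sAD [fi fR] [gi gR] fg; have DA x : x \in D -> x \notin A -> x \in D :\: A.
  by rewrite inE => -> ->.
split=> [x y xD yD|x xD]; last by case: ifP => [/fR|/negbT/(DA x xD)/gR].
case: ifP => xA; case: ifP => yA.
- exact: fi.
- by move/eqP; rewrite (negPf (fg _ _ xA (DA _ yD (negbT yA)))).
- by move/esym/eqP; rewrite (negPf (fg _ _ yA (DA _ xD (negbT xA)))).
- by apply: gi; apply: DA; rewrite ?xA ?yA.
Qed.

Section Induction.
Context {m : nat}.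
Hypothesis IHm : forall R D, #|D| <= m -> hall_condition R D ->
  exists f, matching R D f.

(* A tight proper subset [A] is matched within [neighbours R A]; the rest of
   [D] still satisfies Hall's condition once those neighbours are removed. *)
Lemma hall_tight R D A : #|D| <= m.+1 -> hall_condition R D ->
    A \subset D -> A != set0 -> A != D -> #|neighbours R A| <= #|A| ->
  exists f, matching R D f.
Proof.
move=> Dm hallD sAD A0 AD tight.
have ltAD : #|A| < #|D| by apply: proper_card; rewrite properEneq AD sAD.
have [f mf] := IHm (leq_trans ltAD Dm) (fun B sBA => hallD B (subset_trans sBA sAD)).
pose R2 := [rel x y | R x y && (y \notin neighbours R A)].
have DAm : #|D :\: A| <= m.
  by move: A0 Dm; rewrite -card_gt0 cardsD (setIidPr sAD); lia.
have hall2 : hall_condition R2 (D :\: A).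
  move=> B sBDA; have sABD : A :|: B \subset D.
    by rewrite subUset sAD (subset_trans sBDA) ?subsetDl.
  have AB0 : A :&: B = set0.
    apply/setP=> x; rewrite !inE; apply/andP=> -[xA xB].
    by have := subsetP sBDA x xB; rewrite !inE xA.
  have sN : neighbours R (A :|: B) \subset neighbours R A :|: neighbours R2 B.
    apply/subsetP=> y /neighboursP[x]; rewrite !in_setU => /orP[xA|xB] Rxy.
      by apply/orP; left; apply/neighboursP; exists x.
    case yA: (y \in neighbours R A) => //=.
    by apply/neighboursP; exists x => //=; rewrite Rxy yA.
  have := hallD _ sABD; have := cardsUI A B; have := subset_leq_card sN.
  have := cardsUI (neighbours R A) (neighbours R2 B); rewrite AB0 cards0; lia.
have [g mg] := IHm DAm hall2.
exists (fun x => if x \in A then f x else g x).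
apply: matching_glue => //; first by apply: matching_subrel mg => x y /andP[].
move=> x y xA /(proj2 mg) /andP[_]; apply: contra => /eqP <-.
by apply/neighboursP; exists x => //; apply: (proj2 mf).
Qed.

(* With no tight proper subset, any edge [x0 y0] can be used: removing [x0]
   and [y0] costs every remaining subset at most one neighbour. *)
Lemma hall_slack R D : #|D| <= m.+1 -> 0 < #|D| -> hall_condition R D ->
    (forall A, A \subset D -> A != set0 -> A != D -> #|A| < #|neighbours R A|) ->
  exists f, matching R D f.
Proof.
move=> Dm /card_gt0P[x0 x0D] hallD slack.
have /card_gt0P[y0 /neighboursP[_ /set1P -> Rxy0]] : 0 < #|neighbours R [set x0]|.
  by have := hallD [set x0]; rewrite sub1set x0D cards1; apply.
pose R' := [rel x y | R x y && (y != y0)].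
have Dx0m : #|D :\ x0| <= m by move: Dm; rewrite (cardsD1 x0) x0D; lia.
have hall' : hall_condition R' (D :\ x0).
  move=> B sBD; have [->|B0] := eqVneq B set0; first by rewrite cards0.
  have sBD' : B \subset D := subset_trans sBD (subsetDl _ _).
  have BD : B != D.
    by apply/eqP=> eBD; have := subsetP sBD x0; rewrite eBD x0D setD11 => /(_ isT).
  have sN : neighbours R B \subset y0 |: neighbours R' B.
    apply/subsetP=> y /neighboursP[x xB Rxy]; rewrite in_setU1.
    have [//|ne] := eqVneq y y0; apply/neighboursP; exists x => //=.
    by rewrite Rxy ne.
  have := slack _ sBD' B0 BD; have := subset_leq_card sN; rewrite cardsU1; lia.
have [g mg] := IHm Dx0m hall'.
exists (fun x => if x \in [set x0] then y0 else g x).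
apply: matching_glue; rewrite ?sub1set //.
- by split=> [x y /set1P-> /set1P->|x /set1P->].
- by apply: matching_subrel mg => x y /andP[].
- by move=> x y _ /(proj2 mg) /andP[_]; rewrite eq_sym.
Qed.

End Induction.

Theorem hall_marriage R D : hall_condition R D -> exists f, matching R D f.
Proof.
move: (leqnn #|D|); move: {2}#|D| => m; elim: m R D => [|m IHm] R D Dm hallD.
  move: Dm; rewrite leqn0 cards_eq0 => /eqP->.
  by exists id; split=> x; rewrite inE.
have [Dle|Dgt] := leqP #|D| m; first exact: IHm.
have [/existsP[A /and4P[sAD A0 AD tight]]|] :=
  boolP [exists A : {set T}, [&& A \subset D, A != set0, A != D & #|neighbours R A| <= #|A|]].
  exact: (hall_tight IHm Dm hallD sAD A0 AD tight).
move/existsPn=> nt; apply: (hall_slack IHm Dm _ hallD); first lia.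
move=> A sAD A0 AD; have := nt A; rewrite sAD A0 AD /=; lia.
Qed.

End HallMarriage.

Lemma sum_indicator1 (T : finType) (a : T) : \sum_(j : T) (a == j) = 1.
Proof. by rewrite (bigD1 a) //= eqxx big1 // => j /negbTE; rewrite eq_sym => ->. Qed.

Lemma sum_perm_indicator1 (T : finType) (s : {perm T}) (j : T) :
  \sum_(i : T) (s i == j) = 1.
Proof.
rewrite -(sum_indicator1 ((s^-1)%g j)); apply: eq_bigr => i _.
by congr nat_of_bool; apply/eqP/eqP=> <-; rewrite ?permK ?permKV.
Qed.

Section RegularMatrices.
Variables (n r : nat) (B : 'I_n -> 'I_n -> nat).
Hypotheses (B_row : forall i, \sum_j B i j = r) (B_col : forall j, \sum_i B i j = r).

(* Double counting the entries of [B] on [A x neighbours A] gives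
   [#|A| * r <= #|neighbours A| * r]. *)
Lemma regular_hall_condition : 0 < r ->
  hall_condition [rel i j | 0 < B i j] [set: 'I_n].
Proof.
move=> r_gt0 A _; set N := neighbours _ A; rewrite -(leq_pmul2r r_gt0).
have -> : #|A| * r = \sum_(i in A) \sum_j B i j.
  by rewrite -sum_nat_const; apply: eq_bigr => i _; rewrite B_row.
have -> : #|N| * r = \sum_(j in N) \sum_i B i j.
  by rewrite -sum_nat_const; apply: eq_bigr => j _; rewrite B_col.
apply: (@leq_trans (\sum_(i in A) \sum_(j in N) B i j)).
  apply: leq_sum => i iA; rewrite [X in _ <= X]big_mkcond /=.
  apply: leq_sum => j _; case: ifP => // jN; case: (posnP (B i j)) => [->|Bij] //.
  by move: jN; have -> // : j \in N by rewrite /N; apply/neighboursP; exists i.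
rewrite exchange_big /=; apply: leq_sum => j _.
by rewrite [X in _ <= X](bigID (mem A)) /= leq_addr.
Qed.

Lemma regular_perm_support : 0 < r -> exists s : {perm 'I_n}, forall i, 0 < B i (s i).
Proof.
move=> r_gt0; have [f [fi fB]] := hall_marriage (regular_hall_condition r_gt0).
have finj : injective f by move=> x y; apply: fi; rewrite inE.
by exists (perm finj) => i; rewrite permE; apply: fB; rewrite inE.
Qed.

End RegularMatrices.

Lemma regular_sum_perms n r (B : 'I_n -> 'I_n -> nat) :
    (forall i, \sum_j B i j = r) -> (forall j, \sum_i B i j = r) ->
  exists sg : nat -> {perm 'I_n}, forall i j, B i j = \sum_(t < r) (sg t i == j).
Proof.
elim: r B => [|r IHr] B B_row B_col.
  exists (fun _ => 1%g) => i j; rewrite big_ord0.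
  by apply/eqP; rewrite -leqn0 -(B_row i) (bigD1 j) //= leq_addr.
have [s0 Bs0] := regular_perm_support B_row B_col (ltn0Sn r).
pose B' i j := B i j - (s0 i == j).
have BE i j : B i j = B' i j + (s0 i == j).
  by rewrite /B' subnK //; case: eqP => [<-|].
have [||sg B'E] := IHr B'.
- move=> i; have := B_row i; rewrite (eq_bigr _ (fun j _ => BE i j)).
  by rewrite big_split /= sum_indicator1 addn1 => -[].
- move=> j; have := B_col j; rewrite (eq_bigr _ (fun i _ => BE i j)).
  by rewrite big_split /= sum_perm_indicator1 addn1 => -[].
exists (fun t => if t is t'.+1 then sg t' else s0) => i j.
by rewrite big_ord_recl /= BE B'E addnC.
Qed.

Local Open Scope ring_scope.

Lemma alternating_path_last_sum (a : int) (t : seq int) :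
    path (fun x y => y == - x) a t ->
  last a t = (-1) ^+ size t * a /\
  \sum_(x <- a :: t) x = (if odd (size t) then 0 else a).
Proof.
elim: t a => [|b t IHt] a /=; first by rewrite expr0 mul1r big_seq1.
case/andP=> /eqP-> /IHt[-> sum_t]; split; first by rewrite exprS mulN1r mulrN mulNr.
by rewrite big_cons sum_t; case: odd; rewrite /= ?addr0 ?subrr.
Qed.

Lemma sum_filter_neq0 (s : seq int) :
  \sum_(x <- [seq x <- s | x != 0]) x = \sum_(x <- s) x.
Proof. by rewrite big_filter big_mkcond; apply: eq_bigr => x _; case: eqP => // ->. Qed.

Lemma one_star_alt_cases (u : seq int) : one_star_alt u ->
  let t := [seq x <- u | x != 0] in
  \sum_(x <- u) x = 0 /\ (t = [::] \/ last 0 t = -1) \/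
  \sum_(x <- u) x = 1 /\ t != [::] /\ last 0 t = 1.
Proof.
rewrite /one_star_alt -sum_filter_neq0 => /andP[/andP[_]].
case: [seq x <- u | x != 0] => [|a t] /=; first by rewrite big_nil; left; split; [|left].
move=> /eqP-> /alternating_path_last_sum[-> ->]; rewrite -signr_odd mulr1.
by case: odd; [left; split; [|right] | right].
Qed.

Lemma sign_alt_sum (u : seq int) : sign_alt u -> \sum_(x <- u) x = 1.
Proof.
by case/andP=> /andP[/one_star_alt_cases[[_ [->|->]]|[-> _]] t0] /eqP.
Qed.

Definition is01 (x : int) : bool := (x == 0) || (x == 1).

Lemma filter_neq0_all01 (v : seq int) : all is01 v ->
  [seq x <- v | x != 0] = nseq (count_mem 1 v) 1 /\
  \sum_(x <- v) x = (count_mem 1 v)%:R.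
Proof.
elim: v => [|x v IHv] /=; first by rewrite big_nil.
case/andP=> /orP[] /eqP-> /IHv[fv sv]; rewrite big_cons fv sv /=; first by rewrite add0r.
by rewrite add1n -addn1 natrD addrC.
Qed.

Lemma sign_alt_cat01 (u v : seq int) :
    one_star_alt u -> all is01 v -> \sum_(x <- v) x = 1 - \sum_(x <- u) x ->
  sign_alt (u ++ v).
Proof.
move=> ualt v01 sum_v; have [filter_v sum_v'] := filter_neq0_all01 v01.
have zpm1_v : all zpm1 v by apply: sub_all v01 => x /orP[]/eqP->.
have /andP[/andP[zpm1_u head_u] sorted_u] := ualt.
rewrite /sign_alt /one_star_alt filter_cat filter_v all_cat zpm1_u zpm1_v /=.
case: (one_star_alt_cases ualt) => [[sum_u last_u]|[sum_u [t0 last_u]]];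
  rewrite sum_u sum_v' ?subr0 in sum_v.
- have -> : count_mem 1 v = 1%N by apply/eqP; rewrite -(eqr_nat int) sum_v.
  move: head_u sorted_u last_u; case: [seq x <- u | x != 0] => [|a t] //= ->.
  by rewrite cats1 rcons_path => -> [] // ->; rewrite opprK last_rcons.
- have -> : count_mem 1 v = 0%N by apply/eqP; rewrite -(eqr_nat int) sum_v subrr.
  by rewrite cats0 head_u sorted_u t0 last_u.
Qed.

Lemma sign_alt_indicator n (F : 'I_n -> int) (a : 'I_n) :
  (forall j, F j = (a == j)%:R) -> sign_alt [seq F j | j <- enum 'I_n].
Proof.
move=> Fa; rewrite -[[seq F j | j <- _]]cat0s; apply: sign_alt_cat01 => //.
  by apply/allP=> _ /mapP[j _ ->]; rewrite Fa /is01; case: (a == j).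
by rewrite big_map big_enum (eq_bigr _ (fun j _ => Fa j)) -natr_sum sum_indicator1 big_nil.
Qed.

Lemma sum_map_enum n (F : 'I_n -> int) :
  \sum_(x <- [seq F j | j <- enum 'I_n]) x = \sum_j F j.
Proof. by rewrite big_map big_enum. Qed.

Lemma ASM_row_sum n (A : 'M[int]_n) i : is_ASM A -> \sum_j A i j = 1.
Proof. by case=> _ [/(_ i)/sign_alt_sum + _]; rewrite sum_map_enum. Qed.

Lemma ASM_col_sum n (A : 'M[int]_n) j : is_ASM A -> \sum_i A i j = 1.
Proof. by case=> _ [_ /(_ j)/sign_alt_sum]; rewrite sum_map_enum. Qed.

Lemma deficit_row_sum n k (A : 'I_k -> 'I_n -> 'I_n -> int) :
    (forall s i, \sum_j A s i j = 1) ->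
    (forall i j, is01 (\sum_s A s i j)) ->
  forall i, (\sum_j ((\sum_s A s i j)%R == 0) = n - k)%N.
Proof.
move=> A_row A01 i; set p := fun j => \sum_s A s i j.
have sum_p : \sum_j p j = k%:R.
  by rewrite /p exchange_big (eq_bigr _ (fun s _ => A_row s i)) sumr_const card_ord.
have : \sum_j (p j + (p j == 0)%:R) = n%:R :> int.
  rewrite -[n in RHS]card_ord -sumr_const; apply: eq_bigr => j _.
  by case/orP: (A01 i j) => /eqP; rewrite /p => ->.
rewrite big_split /= sum_p -natr_sum -natrD => /eqP; rewrite eqr_nat => /eqP e.
by rewrite -[in RHS]e addKn.
Qed.

Lemma perm_mx_entry (R : pzSemiRingType) n (s : {perm 'I_n}) i j :
  (perm_mx s : 'M[R]_n) i j = (s i == j)%:R.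
Proof. by rewrite perm_mxEsub !mxE. Qed.

Definition stack_perms n k (A : 'I_k -> 'M[int]_n) (sg : nat -> {perm 'I_n})
    (s : 'I_n) : 'M[int]_n :=
  if insub (val s) : option 'I_k is Some s' then A s' else perm_mx (sg (s - k)%N).

Section StackPerms.
Variables (n k : nat) (A : 'I_k -> 'M[int]_n) (sg : nat -> {perm 'I_n}).
Let H := stack_perms A sg.

Lemma stack_perms_lt (s : 'I_n) (hs : (s < k)%N) : H s = A (Ordinal hs).
Proof. by rewrite /H /stack_perms insubT. Qed.

Lemma stack_perms_ge (s : 'I_n) : (k <= s)%N -> H s = perm_mx (sg (s - k)%N).
Proof. by move=> hs; rewrite /H /stack_perms insubF // ltnNge hs. Qed.

Lemma stack_perms_vertical i j : (k <= n)%N ->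
  [seq H s i j | s <- enum 'I_n] =
  [seq A s i j | s <- enum 'I_k] ++ [seq (sg t i == j)%:R | t <- iota 0 (n - k)].
Proof.
move=> kn; pose G m := if insub m : option 'I_k is Some s then A s i j
                       else (sg (m - k)%N i == j)%:R.
transitivity [seq G s | s <- iota 0 n].
  rewrite -val_enum_ord -map_comp; apply: eq_map => s /=.
  by rewrite /H /stack_perms /G; case: insub => //; rewrite perm_mx_entry.
rewrite -[X in iota 0 X](subnKC kn) iotaD map_cat add0n; congr (_ ++ _).
  by rewrite -val_enum_ord -map_comp; apply: eq_map => s /=; rewrite /G valK.
rewrite -[k in iota k]addn0 iotaDl -map_comp; apply: eq_map => t /=.
by rewrite /G insubF ?addKn // ltnNge leq_addr.
Qed.

Lemma is_ASHM_stack_perms : (k <= n)%N ->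
    (forall s, is_ASM (A s)) ->
    (forall i j, one_star_alt [seq A s i j | s <- enum 'I_k]) ->
    (forall i j, \sum_s A s i j + (\sum_(t < n - k) (sg t i == j))%:R = 1) ->
  is_ASHM H.
Proof.
move=> kn ASM_A alt_A sum_A.
split; [|split; [|split]].
- move=> i j s; rewrite /H /stack_perms; case: insub => [s'|].
    by have [+ _] := ASM_A s'; apply.
  by rewrite perm_mx_entry /zpm1; case: (_ == j).
- move=> j s; rewrite /H /stack_perms; case: insub => [s'|].
    by have [_ [_ ]] := ASM_A s'; apply.
  set sigma := sg _; apply: (sign_alt_indicator (a := (sigma^-1)%g j)) => i.
  by rewrite perm_mx_entry -[in RHS](inj_eq (@perm_inj _ sigma)) permKV eq_sym.
- move=> i s; rewrite /H /stack_perms; case: insub => [s'|].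
    by have [_ [+ _]] := ASM_A s'; apply.
  by apply: (sign_alt_indicator (a := sg _ i)) => j; rewrite perm_mx_entry.
- move=> i j; rewrite stack_perms_vertical //; apply: sign_alt_cat01 => //.
    by apply/allP=> _ /mapP[t _ ->]; rewrite /is01; case: (_ == j).
  rewrite -val_enum_ord -map_comp !sum_map_enum.
  by rewrite -[1 in RHS](sum_A i j) addrAC subrr add0r natr_sum.
Qed.

End StackPerms.

Theorem mainTheorem11 (n k : nat) (hk : (k < n)%N) (A : 'I_k -> 'M[int]_n) :
  (forall s, is_ASM (A s)) ->
  (forall i j, one_star_alt [seq A s i j | s <- enum 'I_k]) ->
  exists H : 'I_n -> 'M[int]_n,
    is_ASHM H /\
    (forall s : 'I_n, forall hs : (s < k)%N, H s = A (Ordinal hs)) /\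
    (forall s : 'I_n, (k <= s)%N -> is_perm_mx (H s)).
Proof.
move=> ASM_A alt_A; pose p i j := \sum_s A s i j.
have p01 i j : is01 (p i j).
  rewrite /is01 /p -sum_map_enum.
  by case: (one_star_alt_cases (alt_A i j)) => -[-> _]; rewrite eqxx ?orbT.
have [sg deficitE] := regular_sum_perms
  (deficit_row_sum (fun s i => ASM_row_sum i (ASM_A s)) p01)
  (deficit_row_sum (A := fun s j i => A s i j) (fun s j => ASM_col_sum j (ASM_A s))
     (fun j i => p01 i j)).
exists (stack_perms A sg); split; [|split].
- apply: is_ASHM_stack_perms => // [|i j]; first exact: ltnW.
  by rewrite -deficitE; case/orP: (p01 i j) => /eqP; rewrite /p => ->.
- exact: stack_perms_lt.
- by move=> s hs; rewrite stack_perms_ge ?perm_mx_is_perm.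
Qed.
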